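(* Let $n,k,s$ be positive integers with $2\le s\le\lfloor n/k\rfloor$, write $n=ds+s_0$ with $d=\lfloor n/s\rfloor$, and assume $s_0<\min\{d,s\}$. The Cubic Code is a valid exact-repair (indeed repair-by-transfer) scheme for the Fixed Cluster Repair System with parameters $(n,k,s)$ storing a file of size $M$, with storage $\alpha$ equal to its repair bandwidth $\gamma$, where $$\gamma_{cc}(n,k,s)=\begin{cases}\dfrac{Md^{s}}{d^{s+1}-(d-\lceil\frac{k}{s+1}\rceil)^{s_1}(d-\lfloor\frac{k}{s+1}\rfloor)^{s+1-s_1}} & \text{if } s_0\ge\lfloor\frac{k}{s+1}\rfloor,\\[3mm] \dfrac{Md^{s}}{d^{s+1}-(d-s_0)(d-\lceil\frac{k-s_0}{s}\rceil)^{s_2}(d-\lfloor\frac{k-s_0}{s}\rfloor)^{s-s_2}} & \text{if } s_0<\lfloor\frac{k}{s+1}\rfloor,\end{cases}$$ with $s_1=k\bmod(s+1)$ and $s_2=(k-s_0)\bmod s$.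
   Context: FCRS: $n=ds+s_0$ servers in clusters $1,\dots,s$ of size $d$ and cluster $s+1$ of size $s_0$; server $(i,j)$ stores at most $\alpha$ units; any $k$ servers (from any clusters) must recover the file; a failed server $(r,\ell)$ is repaired (exactly) by downloading $\beta$ units from each of the $d$ servers of any cluster $i\in[s]$, $i\ne r$; repair bandwidth $\gamma=d\beta$. Cubic Code: split the file into $m$ independent chunks of size $M/m$ and encode them with a $(d^{s+1},m)$ MDS code whose codeword symbols $C_b$ are indexed by strings $b=b_{s+1}\cdots b_1$ with $b_i\in[d]$. Server $(i,j)$, $(i,j)\in([s]\times[d])\cup(\{s+1\}\times[s_0])$, stores $\{C_b: b_i=j\}$. To repair $(r,\ell)$ from cluster $i$, server $(i,j)$ sends $\{C_b:b_i=j,\ b_r=\ell\}$. The number of chunks is $m=\min\{d^{s+1}-\prod_{i=1}^{s+1}(d-k_i):k_i\in\mathbb Z_{\ge0},\ \sum_{i}k_i=k,\ k_{s+1}\le s_0\}$, the number of distinct codeword symbols held by the worst-case set of $k$ servers. *)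

From HB Require Import structures.
From mathcomp Require Import all_boot all_order all_algebra.
Set Implicit Arguments. Unset Strict Implicit. Unset Printing Implicit Defensive.
Import Order.TTheory GRing.Theory Num.Theory.

(* Conventions: d = n %/ s, s0 = n %% s.  Clusters 1..s+1 are indexed by
   i : 'I_s.+1 (cluster i+1); cluster s+1 is ord_max.  Positions inside a
   cluster are j : 'I_d (position j+1). *)

(* codeword-symbol indices b = b_{s+1} ... b_1, b_i in [d] *)
Definition Idx (n s : nat) := {ffun 'I_s.+1 -> 'I_(n %/ s)}.

Definition Srv (n s : nat) := ('I_s.+1 * 'I_(n %/ s))%type.

(* (i,j) is an actual server: i in [s] (cluster of size d) or
   i = s+1 and j in [s0] *)
Definition is_server (n s : nat) (p : Srv n s) : bool :=
  (p.1 < s) || (p.2 < n %% s).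

Definition stored (n s : nat) (p : Srv n s) : {set Idx n s} :=
  [set b : Idx n s | b p.1 == p.2].

Definition sent (n s : nat) (h r : Srv n s) : {set Idx n s} :=
  [set b : Idx n s | (b h.1 == h.2) && (b r.1 == r.2)].

Definition num_chunks (n k s : nat) : nat :=
  \big[minn/(n %/ s) ^ s.+1]_(kv : {ffun 'I_s.+1 -> 'I_k.+1} |
        (\sum_(i < s.+1) (kv i : nat) == k) && (kv ord_max <= n %% s))
     ((n %/ s) ^ s.+1 - \prod_(i < s.+1) (n %/ s - kv i)).

Definition is_MDS (I : finType) (A : Type) (m : nat)
  (enc : {ffun 'I_m -> A} -> I -> A) : Prop :=
  forall J : {set I}, m <= #|J| ->
    forall x y, {in J, enc x =1 enc y} -> x = y.

Local Open Scope ring_scope.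
Definition gamma_cc (R : realFieldType) (n k s : nat) (M : R) : R :=
  let d := (n %/ s)%N in let s0 := (n %% s)%N in
  if (k %/ s.+1 <= s0)%N then
    let s1 := (k %% s.+1)%N in
    M * d%:R ^+ s /
      (d%:R ^+ s.+1
       - (d%:R - ((k + s) %/ s.+1)%N%:R) ^+ s1
         * (d%:R - (k %/ s.+1)%N%:R) ^+ (s.+1 - s1))
  else
    let s2 := ((k - s0) %% s)%N in
    M * d%:R ^+ s /
      (d%:R ^+ s.+1
       - (d%:R - s0%:R)
         * (d%:R - ((k - s0 + s.-1) %/ s)%N%:R) ^+ s2
         * (d%:R - ((k - s0) %/ s)%N%:R) ^+ (s - s2)).

(* A set of k servers with k_i of them in cluster i sees exactly the symbols
   C_b having b_i among its k_i chosen positions for some i, so it misses a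
   box of prod_i (d - k_i) symbols; by the MDS property it recovers the file
   once m <= d^(s+1) - prod_i (d - k_i), whence the definition of m.  Moving
   one unit from a larger k_i to a smaller one never decreases the product,
   so the worst case is the balanced load vector, unless the constraint
   k_(s+1) <= s0 binds (s0 < k/(s+1)); then k_(s+1) = s0 and the remaining
   k - s0 servers are balanced over s clusters.  Every server stores the
   d^s symbols with b_i = j, and a repair downloads d^(s-1) of them from
   each of the d helpers, again d^s symbols of size M/m each. *)

From HB Require Import structures.
From mathcomp Require Import all_boot all_order all_algebra zify.
Import Order.TTheory GRing.Theory Num.Theory.
Set Implicit Arguments. Unset Strict Implicit. Unset Printing Implicit Defensive.

Lemma bigD2 (R : Type) (idx : R) (op : Monoid.com_law idx) (I : finType) (i j : I)
    (F : I -> R) :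
  i != j ->
  \big[op/idx]_t F t = op (F i) (op (F j) (\big[op/idx]_(t | (t != i) && (t != j)) F t)).
Proof. by move=> ij; rewrite (bigD1 i) //= (bigD1 j) //= eq_sym. Qed.

Definition balanced_prod (d K m : nat) : nat :=
  (d - (K %/ m).+1) ^ (K %% m) * (d - K %/ m) ^ (m - K %% m).

Lemma balanced_prodE d a r m : r < m ->
  balanced_prod d (a * m + r) m = (d - a.+1) ^ r * (d - a) ^ (m - r).
Proof.
move=> rm; have m_gt0 : 0 < m by apply: leq_ltn_trans rm.
by rewrite /balanced_prod divnMDl // modnMDl divn_small // modn_small // addn0.
Qed.

Section Smoothing.

Variable m : nat.
Implicit Types (x : 'I_m -> nat) (i j t : 'I_m).

Definition shift1 x i j : 'I_m -> nat :=
  fun t => if t == i then (x i).+1 else if t == j then (x j).-1 else x t.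

Lemma big_shift1 (R : Type) (idx : R) (op : Monoid.com_law idx) (f : nat -> R) x i j :
  i != j ->
  \big[op/idx]_t f (shift1 x i j t) =
    op (f (x i).+1) (op (f (x j).-1) (\big[op/idx]_(t | (t != i) && (t != j)) f (x t))).
Proof.
move=> ij; have ji : (j == i) = false by rewrite eq_sym (negbTE ij).
rewrite (bigD2 _ _ ij) /shift1 eqxx ji eqxx; congr (op _ (op _ _)).
by apply: eq_bigr => t /andP[/negbTE -> /negbTE ->].
Qed.

Lemma shift1_sum x i j : i != j -> 0 < x j -> \sum_t shift1 x i j t = \sum_t x t.
Proof. by move=> ij xj; rewrite (big_shift1 _ (fun v => v)) // (bigD2 _ _ ij) /=; lia. Qed.

Lemma shift1_prod_ge x i j d : i != j -> x i < x j -> x j <= d ->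
  \prod_t (d - x t) <= \prod_t (d - shift1 x i j t).
Proof.
move=> ij xij xjd; rewrite (big_shift1 _ (fun v => d - v)) // (bigD2 _ _ ij) /=.
by rewrite !mulnA leq_mul2r; apply/orP; right; nia.
Qed.

Lemma shift1_sumsq_lt x i j : i != j -> (x i).+1 < x j ->
  \sum_t (shift1 x i j t) ^ 2 < \sum_t (x t) ^ 2.
Proof. by move=> ij xij; rewrite (big_shift1 _ (fun v => v ^ 2)) // (bigD2 _ _ ij) /=; nia. Qed.

Lemma shift1_le x i j d : x i < x j -> (forall t, x t <= d) ->
  forall t, shift1 x i j t <= d.
Proof.
move=> xij xd t; have := xd j; rewrite /shift1.
by case: ifP => _; [lia | case: ifP => _; [lia | rewrite xd]].
Qed.

Lemma prod_sub_two_valued x d a t0 :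
  (forall t, (x t == a) || (x t == a.+1)) -> x t0 = a ->
  \prod_t (d - x t) = balanced_prod d (\sum_t x t) m.
Proof.
move=> two xt0; pose P := [set t | x t == a.+1].
have xE t : x t = a + (t \in P).
  rewrite inE; case/orP: (two t) => /eqP ->; last by rewrite eqxx addn1.
  by rewrite (ltn_eqF (ltnSn a)) addn0.
have cardPC : #|P| + #|~: P| = m by rewrite cardsC card_ord.
have PC_gt0 : 0 < #|~: P|.
  by apply/card_gt0P; exists t0; rewrite !inE xt0 (ltn_eqF (ltnSn a)).
have -> : \sum_t x t = a * m + #|P|.
  rewrite (eq_bigr (fun t => a + (t \in P))) // big_split sum_nat_const card_ord mulnC.
  by rewrite -sum1_card [in RHS]big_mkcond.
rewrite balanced_prodE; last by lia.
rewrite (bigID (mem P)) /=.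
under eq_bigr => t Pt do rewrite xE Pt addn1.
under [X in _ * X]eq_bigr => t /negbTE Pt do rewrite xE Pt addn0.
rewrite !prod_nat_const; congr (_ * _ ^ _).
rewrite (@eq_card _ _ (~: P)) => [|t]; last by rewrite inE.
by rewrite -(addKn #|P| #|~: P|) cardPC.
Qed.

(* Induction on the sum of squares, which shifts strictly decrease; a vector
   admitting no shift between coordinates at distance >= 2 takes two
   adjacent values. *)
Lemma prod_sub_le_balanced x d : 0 < m -> (forall t, x t <= d) ->
  \prod_t (d - x t) <= balanced_prod d (\sum_t x t) m.
Proof.
move=> m_gt0; have [N] := ubnP (\sum_t (x t) ^ 2).
elim: N x => // N IH x sumsq xd.
case: (boolP [exists i, exists j, (x i).+1 < x j]) => [|/existsPn flat].
  case/existsP => i /existsP[j gap].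
  have ij : i != j by apply: contraTneq gap => ->; rewrite ltnNge leqnSn.
  have xij : x i < x j by apply: ltnW.
  apply: leq_trans (shift1_prod_ge ij xij (xd j)) _.
  rewrite -(shift1_sum ij); last by apply: leq_ltn_trans gap.
  apply: IH; last exact: shift1_le.
  by apply: leq_trans (shift1_sumsq_lt ij gap) _; rewrite -ltnS.
have [t0 _ xmin] := @arg_minnP _ (Ordinal m_gt0) predT x isT.
apply/eq_leq/(prod_sub_two_valued (a := x t0) _ _ erefl) => t.
by have := xmin t isT; have /existsPn/(_ t) := flat t0; lia.
Qed.

End Smoothing.

Definition balanced_vec (m K t : nat) : nat := K %/ m + (t < K %% m).

Lemma sum_ord_ltn m r : \sum_(t < m) (t < r : nat) = minn r m.
Proof.
elim: m => [|m IH]; first by rewrite big_ord0 minn0.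
by rewrite big_ord_recr /= IH; case: ltnP => /=; lia.
Qed.

Lemma balanced_vec_sum m K : 0 < m -> \sum_(t < m) balanced_vec m K t = K.
Proof.
move=> m_gt0; rewrite big_split sum_nat_const card_ord sum_ord_ltn /=.
by rewrite (minn_idPl (ltnW (ltn_pmod K m_gt0))) mulnC -divn_eq.
Qed.

Lemma balanced_vec_prod m K d : 0 < m ->
  \prod_(t < m) (d - balanced_vec m K t) = balanced_prod d K m.
Proof.
move=> m_gt0; have last_m : m.-1 < m by rewrite prednK.
rewrite (prod_sub_two_valued d (a := K %/ m) (t0 := Ordinal last_m)) ?balanced_vec_sum //.
  by move=> t; rewrite /balanced_vec; case: (t < K %% m); rewrite ?addn1 ?addn0 eqxx ?orbT.
by rewrite /balanced_vec /= ltnNge -ltnS prednK // ltn_pmod // addn0.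
Qed.

Lemma prod_sub_le_capped m d c K (x : 'I_m.+1 -> nat) :
  0 < m -> c < K %/ m.+1 -> (forall t, x t <= d) -> \sum_t x t = K ->
  x ord_max <= c ->
  \prod_t (d - x t) <= (d - c) * balanced_prod d (K - c) m.
Proof.
move=> m_gt0 cK; have [N] := ubnP (c - x ord_max).
elim: N x => // N IH x gap xd sumx; rewrite leq_eqVlt => /orP[/eqP last_c | last_lt_c].
  rewrite big_ord_recr /= last_c mulnC leq_mul2l; apply/orP; right.
  have <- : \sum_(t < m) x (widen_ord (leqnSn m) t) = K - c.
    by rewrite -sumx big_ord_recr /= last_c addnK.
  exact: prod_sub_le_balanced.
have [j last_lt_j] : exists j, x ord_max < x j.
  case: (boolP [exists j, x ord_max < x j]) => [/existsP // | /existsPn below].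
  have : K <= \sum_(t < m.+1) c.
    by rewrite -sumx; apply: leq_sum => t _; rewrite (leq_trans _ (ltnW last_lt_c)) // leqNgt below.
  by rewrite sum_nat_const card_ord; move: cK; rewrite leq_divRL //; nia.
have ne : ord_max != j by apply: contraTneq last_lt_j => <-; rewrite ltnn.
apply: leq_trans (shift1_prod_ge ne last_lt_j (xd j)) _.
have shift_last : shift1 x ord_max j ord_max = (x ord_max).+1 by rewrite /shift1 eqxx.
apply: IH; rewrite ?shift_last ?shift1_sum //; [lia | exact: shift1_le | lia].
Qed.

Lemma bigminn_le (I : finType) (P : pred I) (F : I -> nat) x0 i :
  P i -> \big[minn/x0]_(j | P j) F j <= F i.
Proof.
move=> Pi; rewrite -big_filter.
have : i \in [seq j <- index_enum I | P j] by rewrite mem_filter Pi mem_index_enum.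
elim: (filter _ _) => //= j r IH; rewrite in_cons big_cons => /orP[/eqP <- | /IH].
  exact: geq_minl.
exact: leq_trans (geq_minr _ _).
Qed.

(* The largest number of codeword symbols missed by k servers: balanced
   loads, unless the bound s0 on the load of cluster s+1 binds. *)
Definition max_uncovered (d s0 k s : nat) : nat :=
  if k %/ s.+1 <= s0 then balanced_prod d k s.+1
  else (d - s0) * balanced_prod d (k - s0) s.

Lemma prod_le_max_uncovered d s0 k s (x : 'I_s.+1 -> nat) : 0 < s ->
  (forall t, x t <= d) -> \sum_t x t = k -> x ord_max <= s0 ->
  \prod_t (d - x t) <= max_uncovered d s0 k s.
Proof.
move=> s_gt0 xd sumx last_s0; rewrite /max_uncovered.
case: (leqP (k %/ s.+1) s0) => cap.
  by rewrite -sumx; apply: prod_sub_le_balanced.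
exact: prod_sub_le_capped.
Qed.

Lemma max_uncovered_attained d s0 k s : 0 < s ->
  exists2 x : 'I_s.+1 -> nat, \sum_t x t = k /\ x ord_max <= s0
    & \prod_t (d - x t) = max_uncovered d s0 k s.
Proof.
move=> s_gt0; rewrite /max_uncovered; case: (leqP (k %/ s.+1) s0) => cap.
  exists (balanced_vec s.+1 k); last exact: balanced_vec_prod.
  split; first exact: balanced_vec_sum.
  rewrite /balanced_vec /=.
  have -> : (s < k %% s.+1) = false by rewrite ltnNge -ltnS ltn_pmod.
  by rewrite addn0.
have s0k : s0 <= k by apply: leq_trans (ltnW cap) (leq_div _ _).
pose x (t : 'I_s.+1) := if t == s :> nat then s0 else balanced_vec s (k - s0) t.
have x_widen (t : 'I_s) : x (widen_ord (leqnSn s) t) = balanced_vec s (k - s0) t.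
  by rewrite /x /= (ltn_eqF (ltn_ord t)).
have x_last : x ord_max = s0 by rewrite /x /= eqxx.
exists x.
  split; last by rewrite x_last.
  by rewrite big_ord_recr /= x_last (eq_bigr _ (fun t _ => x_widen t)) balanced_vec_sum ?subnK.
rewrite big_ord_recr /= x_last mulnC (eq_bigr _ (fun t _ => congr1 (subn d) (x_widen t))).
by rewrite balanced_vec_prod.
Qed.

Lemma max_uncovered_le d s0 k s : 0 < s -> max_uncovered d s0 k s <= d ^ s.+1.
Proof.
move=> s_gt0; have [x _ <-] := max_uncovered_attained d s0 k s_gt0.
have -> : d ^ s.+1 = \prod_(t < s.+1) d by rewrite prod_nat_const card_ord.
by apply: leq_prod => t _; apply: leq_subr.
Qed.

Lemma num_chunks_le n k s (x : 'I_s.+1 -> nat) :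
  \sum_t x t = k -> x ord_max <= n %% s ->
  num_chunks n k s <= (n %/ s) ^ s.+1 - \prod_t (n %/ s - x t).
Proof.
move=> sumx last_s0.
have xk t : x t < k.+1 by rewrite ltnS -sumx (bigD1 t) //= leq_addr.
pose kv : {ffun 'I_s.+1 -> 'I_k.+1} := [ffun t => Ordinal (xk t)].
have kvE t : (kv t : nat) = x t by rewrite ffunE.
apply: leq_trans (bigminn_le _ _ (i := kv) _) _.
  by rewrite /= (eq_bigr _ (fun t _ => kvE t)) sumx eqxx kvE last_s0.
by rewrite (eq_bigr _ (fun t _ => congr1 (subn (n %/ s)) (kvE t))).
Qed.

Lemma num_chunksE n k s : 0 < s -> k <= n %/ s ->
  num_chunks n k s = (n %/ s) ^ s.+1 - max_uncovered (n %/ s) (n %% s) k s.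
Proof.
move=> s_gt0 kd; apply/eqP; rewrite eqn_leq; apply/andP; split.
  have [x [sumx last_s0] <-] := max_uncovered_attained (n %/ s) (n %% s) k s_gt0.
  exact: num_chunks_le.
rewrite /num_chunks.
apply: (big_ind (fun v => (n %/ s) ^ s.+1 - max_uncovered (n %/ s) (n %% s) k s <= v)).
- exact: leq_subr.
- by move=> a b ha hb; rewrite leq_min ha hb.
move=> kv /andP[/eqP sumkv last_s0]; rewrite leq_sub2l // prod_le_max_uncovered //.
by move=> t; apply: leq_trans kd; rewrite -ltnS ltn_ord.
Qed.

Lemma card_box (I T : finType) (F : I -> {set T}) (A : {set {ffun I -> T}}) :
  (forall b, (b \in A) = [forall t, b t \in F t]) -> #|A| = \prod_t #|F t|.
Proof.
move=> AE; have -> : #|A| = #|family F|.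
  by apply: eq_card => b; rewrite AE; apply/forallP/familyP.
by rewrite card_family foldrE big_image.
Qed.

Lemma card_stored n s (p : Srv n s) : #|stored p| = (n %/ s) ^ s.
Proof.
pose F t : {set 'I_(n %/ s)} := if t == p.1 then [set p.2] else setT.
rewrite (@card_box _ _ F) => [|b]; last first.
  rewrite inE; apply/eqP/forallP => [bp t | /(_ p.1)]; rewrite /F.
    by case: eqP => [->|_]; rewrite ?inE ?bp.
  by rewrite eqxx inE => /eqP.
rewrite (bigD1 p.1) //= /F eqxx cards1 mul1n.
rewrite (eq_bigr (fun=> n %/ s)) => [|t /negbTE ->]; last by rewrite cardsT card_ord.
by rewrite prod_nat_const cardC1 card_ord.
Qed.

Lemma sum_card_sent n s (i r : 'I_s.+1) (l : 'I_(n %/ s)) :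
  \sum_j #|sent (i, j) (r, l)| = #|stored (r, l)|.
Proof.
under eq_bigr do rewrite -sum1_card big_mkcond /=.
rewrite exchange_big -sum1_card [RHS]big_mkcond /=; apply: eq_bigr => b _.
rewrite (bigD1 (b i)) //= big1 => [|j /negbTE ne]; rewrite !inE ?eqxx ?addn0 //.
by rewrite eq_sym ne.
Qed.

Definition load n s (S : {set Srv n s}) (t : 'I_s.+1) : nat :=
  #|[set j | (t, j) \in S]|.

Lemma sum_load n s (S : {set Srv n s}) : \sum_t load S t = #|S|.
Proof.
have loadE t : load S t = \sum_j ((t, j) \in S : nat).
  by rewrite /load -sum1_card big_mkcond; apply: eq_bigr => j _; rewrite inE.
rewrite (eq_bigr _ (fun t _ => loadE t)) pair_big -sum1_card [RHS]big_mkcond.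
by apply: eq_bigr => -[t j].
Qed.

Lemma load_last_le n s (S : {set Srv n s}) :
  {subset S <= is_server (s:=s)} -> load S ord_max <= n %% s.
Proof.
move=> S_server; rewrite /load cardE -(size_map val) -[n %% s](size_iota 0).
apply: uniq_leq_size; first by rewrite (map_inj_uniq val_inj) enum_uniq.
move=> _ /mapP[j + ->]; rewrite mem_enum inE => /S_server.
by rewrite /is_server unfold_in /= ltnn mem_iota.
Qed.

Lemma card_uncovered n s (S : {set Srv n s}) :
  #|~: \bigcup_(p in S) stored p| = \prod_t (n %/ s - load S t).
Proof.
rewrite (@card_box _ _ (fun t => ~: [set j | (t, j) \in S])) => [|b].
  by apply: eq_bigr => t _; rewrite cardsCs setCK card_ord.
rewrite inE; apply/idP/forallP => [notS t | notS].
  rewrite !inE; apply: contra notS => tS.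
  by apply/bigcupP; exists (t, b t); rewrite ?inE.
apply/bigcupP => -[p pS]; rewrite inE => /eqP bp.
by have := notS p.1; rewrite !inE bp -surjective_pairing pS.
Qed.

Lemma num_chunks_le_covered n k s (S : {set Srv n s}) :
  {subset S <= is_server (s:=s)} -> #|S| = k ->
  num_chunks n k s <= #|\bigcup_(p in S) stored p|.
Proof.
move=> S_server cardS.
apply: leq_trans (num_chunks_le (x := load S) _ _) _.
- by rewrite sum_load.
- exact: load_last_le.
have := cardsC (\bigcup_(p in S) stored p).
by rewrite card_ffun !card_ord card_uncovered => <-; rewrite addnK.
Qed.

Lemma ceil_divE K m : 0 < m -> 0 < K %% m -> (K + m.-1) %/ m = (K %/ m).+1.
Proof.
move=> m_gt0 r_gt0; have r_lt := ltn_pmod K m_gt0.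
have -> : K + m.-1 = (K %/ m).+1 * m + (K %% m).-1.
  by rewrite {1}(divn_eq K m); move: (K %/ m) (K %% m) r_gt0 r_lt => q r; nia.
by rewrite divnMDl // (@divn_small (K %% m).-1) ?addn0 //; lia.
Qed.

Local Open Scope ring_scope.

Lemma natr_balanced_prod (R : pzRingType) d K m : (0 < m)%N -> (K <= d)%N ->
  (balanced_prod d K m)%:R =
    (d%:R - ((K + m.-1) %/ m)%:R) ^+ (K %% m) * (d%:R - (K %/ m)%:R) ^+ (m - K %% m) :> R.
Proof.
move=> m_gt0 Kd; have Kmd : (K %/ m <= d)%N by apply: leq_trans (leq_div _ _) Kd.
rewrite natrM !natrX (natrB _ Kmd); congr (_ * _).
have [->|r_gt0] := posnP (K %% m); first by rewrite !expr0.
rewrite ceil_divE // natrB //; apply: leq_trans Kd.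
by rewrite {2}(divn_eq K m); move: (K %/ m)%N (K %% m)%N r_gt0 => q r; nia.
Qed.

Lemma gamma_ccE (R : realFieldType) n k s (M : R) :
  (0 < s)%N -> (k <= n %/ s)%N -> (n %% s <= n %/ s)%N ->
  gamma_cc n k s M = ((n %/ s) ^ s)%:R * (M / (num_chunks n k s)%:R).
Proof.
move=> s_gt0 kd s0d; rewrite num_chunksE // natrB ?max_uncovered_le //.
rewrite mulrA [_ * M]mulrC /gamma_cc /max_uncovered !natrX; case: ifP => cap.
  by rewrite natr_balanced_prod.
have s0k : (n %% s <= k)%N.
  by apply: leq_trans (ltnW _) (leq_div k s.+1); rewrite ltnNge cap.
rewrite natrM natrB // natr_balanced_prod ?mulrA //.
exact: leq_trans (leq_subr _ _) kd.
Qed.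

Theorem theorem2 (n k s : nat) (R : realFieldType) (M : R) (A : Type)
  (enc : {ffun 'I_(num_chunks n k s) -> A} -> Idx n s -> A) :
  (0 < k)%N -> (2 <= s)%N -> (s <= n %/ k)%N ->
  (n %% s < minn (n %/ s) s)%N -> 0 < M ->
  is_MDS enc ->
  [/\
   (* recovery: the contents of any k servers determine the file *)
   (forall S : {set Srv n s}, {subset S <= is_server (s:=s)} -> #|S| = k ->
      forall x y,
        (forall p, p \in S -> {in stored p, enc x =1 enc y}) -> x = y),
   (* storage per server: alpha = gamma_cc *)
   (forall p : Srv n s, is_server p ->
      #|stored p|%:R * (M / (num_chunks n k s)%:R) = gamma_cc n k s M) &
   (* exact repair by transfer from any other cluster i in [s], with
      repair bandwidth gamma = gamma_cc *)
   (forall (r i : 'I_s.+1) (l : 'I_(n %/ s)),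
      is_server (r, l) -> (i < s)%N -> i != r ->
      [/\ (forall j : 'I_(n %/ s), is_server (i, j)),
          (forall j : 'I_(n %/ s), sent (i, j) (r, l) \subset stored (i, j)),
          stored (r, l) = \bigcup_(j : 'I_(n %/ s)) sent (i, j) (r, l) &
          \sum_(j : 'I_(n %/ s)) #|sent (i, j) (r, l)|%:R
              * (M / (num_chunks n k s)%:R) = gamma_cc n k s M])].
Proof.
move=> k_gt0 s_ge2 s_le_nk s0_lt _ mds.
have s_gt0 : (0 < s)%N by apply: leq_trans s_ge2.
have kd : (k <= n %/ s)%N by rewrite leq_divRL // mulnC -leq_divRL.
have s0d : (n %% s <= n %/ s)%N by apply/ltnW/(leq_trans s0_lt)/geq_minl.
have gammaE := gamma_ccE M s_gt0 kd s0d.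
split.
- move=> S S_server cardS x y agree; apply: (mds _ (num_chunks_le_covered S_server cardS)).
  by move=> b /bigcupP[p pS bp]; apply: agree pS b bp.
- by move=> p _; rewrite card_stored gammaE.
move=> r i l _ i_lt_s _; split.
- by move=> j; rewrite /is_server /= i_lt_s.
- by move=> j; apply/subsetP => b; rewrite !inE => /andP[].
- apply/setP => b; rewrite inE; apply/idP/bigcupP => [rb | [j _]].
    by exists (b i); rewrite // !inE eqxx rb.
  by rewrite inE => /andP[].
by rewrite -big_distrl /= -natr_sum sum_card_sent card_stored gammaE.
Qed.
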